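(* Let $K$ be a field, $P=K[x_1,\dots,x_n]$, $X=\{x_1,\dots,x_n\}$, $I\subseteq\mathfrak M=\langle x_1,\dots,x_n\rangle$ an ideal, and $Z\subseteq X$ a set of $s$ distinct indeterminates such that $I$ contains a coherently $Z$-separating tuple $(f_1,\dots,f_s)$. If $s=\dim_K(\mathrm{Lin}_{\mathfrak M}(I))$, then $\mathrm{edim}(P/I)=n-s$ and the $Z$-separating re-embedding $\Phi:P/I\to\widehat P/(I\cap\widehat P)$, $\widehat P=K[X\setminus Z]$, is an optimal re-embedding (i.e., every $K$-algebra isomorphism $P/I\cong P''/I''$ with $P''$ a polynomial ring over $K$ satisfies $\dim P''\ge n-s$).
   Context: For $f\in\mathfrak M$, $\mathrm{Lin}_{\mathfrak M}(f)$ is the homogeneous degree-one part of $f$, and $\mathrm{Lin}_{\mathfrak M}(I)=\langle\mathrm{Lin}_{\mathfrak M}(f)\mid f\in I\rangle_K$. For $f\in P$, $\mathrm{indets}(f)$ is the set of indeterminates dividing some term in the support of $f$; for $f\in\mathfrak M$ with $z$ occurring in $\mathrm{Lin}_{\mathfrak M}(f)$ and $c\neq0$ the coefficient of $z$ in $f$, $\mathrm{tail}_z(f)=z-\frac1cf$, and $f$ is $z$-separating if $z\notin\mathrm{indets}(\mathrm{tail}_z(f))$. A tuple $(f_1,\dots,f_s)$ of nonzero elements of $\mathfrak M$ is coherently $Z$-separating ($Z=\{z_1,\dots,z_s\}$) if each $f_i$ is $z_i$-separating and $z_i\notin\mathrm{indets}(f_j)$ for $j\ne i$. The $Z$-separating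 re-embedding is the $K$-algebra isomorphism $P/I\to\widehat P/(I\cap\widehat P)$ induced by $x\mapsto x$ for $x\notin Z$ and $z_i\mapsto\mathrm{tail}_{z_i}(f_i)$. $\mathrm{edim}(P/I)$ is the minimal $m$ with $P/I\cong K[y_1,\dots,y_m]/I'$ for some ideal $I'$. *)

From HB Require Import structures.
From mathcomp Require Import all_boot all_order all_algebra.
From mathcomp Require Import ring_quotient generic_quotient.
From mathcomp.multinomials Require Import mpoly.
Set Implicit Arguments. Unset Strict Implicit. Unset Printing Implicit Defensive.
Import GRing.Theory.
Local Open Scope ring_scope.

(* P = K[x_1,...,x_n] is {mpoly K[n]}; the indeterminate x_i is 'X_i, i : 'I_n. *)

Section Defs.
Variables (K : fieldType) (n : nat).
Local Notation P := {mpoly K[n]}.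

(* membership in the maximal ideal M = <x_1,...,x_n>: zero constant term *)
Definition inM (f : P) : bool := f@_0%MM == 0.

Definition LinM (f : P) : P :=
  \sum_(m <- msupp f | mdeg m == 1%N) f@_m *: 'X_[m].

Definition linvec (f : P) : 'rV[K]_n := \row_i (LinM f)@_(U_(i)%MM).

(* dim_K (Lin_M(I)) = d, where Lin_M(I) = <Lin_M(f) | f in I>_K, expressed
   as: d is the maximal size of a family of elements of I whose linear
   parts are K-linearly independent *)
Definition dimLinM (I : {pred P}) (d : nat) : Prop :=
  (exists fs : d.-tuple P, all (mem I) fs && free (map linvec fs)) /\
  (forall (d' : nat) (fs : d'.-tuple P),
      all (mem I) fs -> free (map linvec fs) -> (d' <= d)%N).

Definition indets (f : P) : pred 'I_n :=
  fun i => has (fun m : 'X_{1..n} => (0 < m i)%N) (msupp f).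

Definition tail (z : 'I_n) (f : P) : P := 'X_z - (f@_(U_(z)%MM))^-1 *: f.

Definition separating (z : 'I_n) (f : P) : Prop :=
  inM f /\ (LinM f)@_(U_(z)%MM) != 0 /\ ~~ indets (tail z f) z.

Definition coh_separating (s : nat) (z : 'I_s -> 'I_n) (f : 'I_s -> P) : Prop :=
  injective z /\
  (forall i, f i != 0) /\
  (forall i, separating (z i) (f i)) /\
  (forall i j, i != j -> ~~ indets (f j) (z i)).

Definition reemb_subst (s : nat) (z : 'I_s -> 'I_n) (f : 'I_s -> P) (x : 'I_n) : P :=
  if [pick j | z j == x] is Some j then tail (z j) (f j) else 'X_x.

Definition reemb (s : nat) (z : 'I_s -> 'I_n) (f : 'I_s -> P) (p : P) : P :=
  comp_mpoly [tuple reemb_subst z f x | x < n] p.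

(* membership in Phat = K[X \ Z] (viewed inside P) *)
Definition inPhat (s : nat) (z : 'I_s -> 'I_n) (q : P) : bool :=
  [forall j, ~~ indets q (z j)].

End Defs.

Local Open Scope quotient_scope.
Definition kalg_iso (K : fieldType) (n m : nat)
    (I : idealr {mpoly K[n]}) (J : idealr {mpoly K[m]}) : Prop :=
  exists phi : {rmorphism {ideal_quot I} -> {ideal_quot J}},
    bijective phi /\
    forall c : K, phi (\pi_({ideal_quot I}) (c%:MP)) = \pi_({ideal_quot J}) (c%:MP).

Definition edim_eq (K : fieldType) (n : nat) (I : idealr {mpoly K[n]}) (e : nat) : Prop :=
  (exists J : idealr {mpoly K[e]}, kalg_iso I J) /\
  (forall (m : nat) (J : idealr {mpoly K[m]}), kalg_iso I J -> (e <= m)%N).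

(* Each tail_{z_j}(f_j) is congruent to z_j modulo I, so the
   re-embedding substitution is congruent to the identity modulo I; it lands
   in Phat = K[X \ Z] and fixes Phat.  Renaming X \ Z as y_1..y_N gives ring
   maps alpha : P -> K[y] and beta : K[y] -> P with beta (alpha p) = p mod I;
   any such retraction induces P/I ~= K[y]/beta^-1(I) (section
   QuotientByRetraction).

   We count tangent vectors at the origin: K-valued derivations
   d of P at 0 (d(pq) = p(0) d(q) + q(0) d(p)) vanishing on I.
   (a) As dim Lin_M(I) = s and the linear parts of the f_j are diagonal on Z,
       an element of I without linear terms in Z has no linear terms at all.
       Hence for every x the map D_x, "coefficient of x after using the f_j
       to eliminate the linear terms in Z", is a tangent vector, and
       D_x(x') = [x = x'] for x, x' in X \ Z.
   (b) If P/I ~= K[y_1..y_m]/J, the lifts of the y_j generate P/I, so a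
       tangent vector vanishing on them is zero.
   Thus d |-> (d(lift y_j))_j embeds the span of the N vectors D_x into K^m,
   and N <= m. *)

From HB Require Import structures.
From mathcomp Require Import all_boot all_order all_algebra.
From mathcomp Require Import ring_quotient generic_quotient.
From mathcomp.multinomials Require Import mpoly.

Set Implicit Arguments. Unset Strict Implicit. Unset Printing Implicit Defensive.
Import GRing.Theory.
Local Open Scope ring_scope.
Local Open Scope quotient_scope.

Section PolynomialFacts.
Variables (R : comNzRingType) (n : nat).
Implicit Types (p q : {mpoly R[n]}).

Lemma mpoly_alg_ind (S : {mpoly R[n]} -> Prop) :
  (forall c, S c%:MP) -> (forall i, S 'X_i) ->
  (forall p q, S p -> S q -> S (p + q)) ->
  (forall p q, S p -> S q -> S (p * q)) -> forall p, S p.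
Proof.
move=> SC SX SD SM p; rewrite [p]mpolyE.
have S0 : S 0 by rewrite -mpolyC0; apply: SC.
apply: (big_ind S) => // m _; rewrite -mul_mpolyC; apply: (SM) => //.
rewrite mpolyXE_id; apply: (big_ind S); [by rewrite -mpolyC1 | exact: SM |].
move=> i _; elim: (m i) => [|k IH]; first by rewrite expr0 -mpolyC1.
by rewrite exprS; apply: SM.
Qed.

Lemma comp_mpoly_comp k l (t : n.-tuple {mpoly R[k]}) (u : k.-tuple {mpoly R[l]}) p :
  comp_mpoly u (comp_mpoly t p) = comp_mpoly [tuple comp_mpoly u (tnth t i) | i < n] p.
Proof.
elim/mpoly_alg_ind: p => [c | i | p q hp hq | p q hp hq].
- by rewrite !comp_mpolyC.
- by rewrite !comp_mpolyXU -!tnth_nth tnth_mktuple.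
- by rewrite !rmorphD /= hp hq.
- by rewrite !rmorphM /= hp hq.
Qed.

Lemma comp_mpoly_congr (I : idealr {mpoly R[n]}) (t : n.-tuple {mpoly R[n]}) p :
  (forall i, \pi_({ideal_quot I}) (tnth t i) = \pi 'X_i) ->
  \pi_({ideal_quot I}) (comp_mpoly t p) = \pi p.
Proof.
move=> tX; elim/mpoly_alg_ind: p => [c | i | p q hp hq | p q hp hq].
- by rewrite comp_mpolyC.
- by rewrite comp_mpolyXU -tnth_nth.
- by rewrite !rmorphD /= hp hq.
- by rewrite !rmorphM /= hp hq.
Qed.

Lemma mcoeffU_M (x : 'I_n) p q :
  (p * q)@_U_(x)%MM = p@_0%MM * q@_U_(x)%MM + q@_0%MM * p@_U_(x)%MM.
Proof.
have coefU_deriv r : r@_U_(x)%MM = (r^`M(x))@_0%MM.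
  by rewrite mcoeff_mderiv mnm0E add0m mulr1n.
rewrite !coefU_deriv mderivM mcoeffD !rmorphM /=.
by rewrite addrC [q@_0%MM * _]mulrC.
Qed.

Lemma mcoeffU_C (x : 'I_n) (c : R) : (c%:MP : {mpoly R[n]})@_U_(x)%MM = 0.
Proof. by rewrite mcoeffC -mdeg_eq0 mdeg1 mulr0. Qed.

End PolynomialFacts.

Section Avoidance.
Variables (K : fieldType) (n : nat).
Local Notation P := {mpoly K[n]}.
Implicit Types (p q : P) (x : 'I_n).

Definition avoids x q : bool := ~~ indets q x.

Lemma avoidsP x q : reflect (forall m, m \in msupp q -> m x = 0%N) (avoids x q).
Proof.
apply: (iffP hasPn) => h m /h; first by rewrite lt0n negbK => /eqP.
by move=> ->.
Qed.

Lemma avoidsC x (c : K) : avoids x c%:MP.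
Proof.
apply/avoidsP => m; rewrite msuppC; case: (c == 0) => //.
by rewrite inE => /eqP ->; rewrite mnm0E.
Qed.

Lemma avoidsX x (y : 'I_n) : y != x -> avoids x 'X_y.
Proof.
by move=> yx; apply/avoidsP => m; rewrite msuppX inE => /eqP ->; rewrite mnm1E (negbTE yx).
Qed.

Lemma avoidsD x p q : avoids x p -> avoids x q -> avoids x (p + q).
Proof.
move=> /avoidsP hp /avoidsP hq; apply/avoidsP => m /msuppD_le.
by rewrite mem_cat => /orP[/hp | /hq].
Qed.

Lemma avoidsM x p q : avoids x p -> avoids x q -> avoids x (p * q).
Proof.
move=> /avoidsP hp /avoidsP hq; apply/avoidsP => m /msuppM_le.
by case/allpairsP => -[m1 m2] /= [/hp h1 /hq h2 ->]; rewrite mnmDE h1 h2.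
Qed.

Lemma avoidsZ x (c : K) q : avoids x q -> avoids x (c *: q).
Proof. by rewrite -mul_mpolyC; apply: avoidsM; apply: avoidsC. Qed.

Lemma avoidsB x p q : avoids x p -> avoids x q -> avoids x (p - q).
Proof. by move=> hp hq; rewrite -scaleN1r; apply/avoidsD/avoidsZ. Qed.

Lemma avoids_comp x (t : n.-tuple P) p :
  (forall i, avoids x (tnth t i)) -> avoids x (comp_mpoly t p).
Proof.
move=> tx; elim/mpoly_alg_ind: p => [c | i | p q hp hq | p q hp hq].
- by rewrite comp_mpolyC; apply: avoidsC.
- by rewrite comp_mpolyXU -tnth_nth.
- by rewrite rmorphD; apply: avoidsD.
- by rewrite rmorphM; apply: avoidsM.
Qed.

Lemma comp_mpoly_fix (t : n.-tuple P) p :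
  (forall i, tnth t i != 'X_i -> avoids i p) -> comp_mpoly t p = p.
Proof.
move=> fix_t; rewrite comp_mpolyEX [RHS]mpolyE; apply: eq_big_seq => m pm.
rewrite comp_mpolyX mpolyXE_id; congr (_ *: _); apply: eq_bigr => i _.
have [-> // | moved] := eqVneq (tnth t i) 'X_i.
by rewrite (avoidsP _ _ (fix_t i moved) m pm) !expr0.
Qed.

Lemma avoids_coefU x q : avoids x q -> q@_U_(x)%MM = 0.
Proof.
move=> /avoidsP qx; apply/eqP; rewrite mcoeff_eq0; apply/negP => /qx.
by rewrite mnm1E eqxx.
Qed.

End Avoidance.

Section LinearParts.
Variables (K : fieldType) (n : nat).
Implicit Types (p : {mpoly K[n]}) (x : 'I_n).

Lemma LinM_coefU p x : (LinM p)@_U_(x)%MM = p@_U_(x)%MM.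
Proof.
rewrite /LinM raddf_sum /=.
under eq_bigr => m _ do rewrite mcoeffZ mcoeffX.
rewrite -big_filter.
have [lin_x | nlin_x] := boolP (U_(x)%MM \in [seq m <- msupp p | mdeg m == 1%N]).
  rewrite (bigD1_seq _ lin_x) ?filter_uniq ?msupp_uniq //= eqxx mulr1.
  by rewrite big1 ?addr0 // => m /negbTE ->; rewrite mulr0.
rewrite big1_seq; last first.
  move=> m /andP[_ hm]; case: eqP => [e | _]; last by rewrite mulr0.
  by move: nlin_x; rewrite -e hm.
by move: nlin_x; rewrite mem_filter mdeg1 eqxx /= mcoeff_msupp negbK => /eqP.
Qed.

Lemma linvecE p x : linvec p 0 x = p@_U_(x)%MM.
Proof. by rewrite mxE LinM_coefU. Qed.

End LinearParts.

Section TangentVectors.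
Variables (K : fieldType) (n : nat).
Local Notation P := {mpoly K[n]}.

Definition point_derivation (d : P -> K) : Prop :=
  [/\ forall p q, d (p + q) = d p + d q,
      forall c, d c%:MP = 0
    & forall p q, d (p * q) = p@_0%MM * d q + q@_0%MM * d p].

(* A tangent vector of P/I at the origin: a point derivation vanishing on I.
   These form the dual of the Zariski tangent space M/(M^2 + I). *)
Definition tangent (I : {pred P}) (d : P -> K) : Prop :=
  point_derivation d /\ forall p, p \in I -> d p = 0.

Lemma point_derivation_coefU (x : 'I_n) : point_derivation (fun p => p@_U_(x)%MM).
Proof. by split=> [p q | c | p q]; rewrite ?mcoeffD ?mcoeffU_C ?mcoeffU_M. Qed.

Lemma point_derivation_ext (d e : P -> K) : d =1 e -> point_derivation d -> point_derivation e.
Proof. by move=> de [dD dC dM]; split=> *; rewrite -!de. Qed.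

Lemma point_derivationB (d e : P -> K) :
  point_derivation d -> point_derivation e -> point_derivation (fun p => d p - e p).
Proof.
move=> [dD dC dM] [eD eC eM]; split=> [p q | c | p q].
- by rewrite dD eD opprD addrACA.
- by rewrite dC eC subr0.
- by rewrite dM eM !mulrBr opprD addrACA.
Qed.

Lemma point_derivation_sum N (k : 'I_N -> K) (d : 'I_N -> P -> K) :
  (forall i, point_derivation (d i)) ->
  point_derivation (fun p => \sum_i k i * d i p).
Proof.
move=> dP; split=> [p q | c | p q].
- by rewrite -big_split; apply: eq_bigr => i _; case: (dP i) => -> _ _; rewrite mulrDr.
- by apply: big1 => i _; case: (dP i) => _ -> _; rewrite mulr0.
- rewrite !mulr_sumr -big_split; apply: eq_bigr => i _.
  by case: (dP i) => _ _ ->; rewrite mulrDr; congr (_ + _); exact: mulrCA.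
Qed.

Lemma tangent_sum (I : {pred P}) N (k : 'I_N -> K) (d : 'I_N -> P -> K) :
  (forall i, tangent I (d i)) -> tangent I (fun p => \sum_i k i * d i p).
Proof.
move=> dT; split; first by apply: point_derivation_sum => i; case: (dT i).
by move=> p pI; apply: big1 => i _; case: (dT i) => _ ->; rewrite ?mulr0.
Qed.

Lemma tangent_pi (I : idealr P) (d : P -> K) p q :
  tangent I d -> \pi_({ideal_quot I}) p = \pi q -> d p = d q.
Proof.
move=> [[dD dC _] dI] /eqP; rewrite -Quotient.idealrBE => /dI.
have dN r : d (- r) = - d r.
  by apply/eqP; rewrite -subr_eq0 opprK -dD addNr -(mpolyC0 n K) dC.
by rewrite dD dN => /eqP; rewrite subr_eq0 => /eqP.
Qed.

End TangentVectors.

(* The field cannot be inferred from the variable x alone. *)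
Arguments point_derivation_coefU {K n}.

Section TangentsUnderIsomorphism.
Variables (K : fieldType) (n m : nat).
Variables (I : idealr {mpoly K[n]}) (J : idealr {mpoly K[m]}).
Local Notation A := {ideal_quot I}.
Local Notation B := {ideal_quot J}.
Variables (phi : {rmorphism A -> B}) (psi : B -> A).
Hypotheses (phiK : cancel phi psi) (psiK : cancel psi phi).
Hypothesis phiC : forall c : K, phi (\pi_A c%:MP) = \pi_B c%:MP.

Definition pull (q : {mpoly K[m]}) : {mpoly K[n]} := repr (psi (\pi_B q)).

Lemma pi_pullD q1 q2 : \pi_A (pull (q1 + q2)) = \pi_A (pull q1 + pull q2).
Proof. by apply: (can_inj phiK); rewrite !rmorphD /= /pull !reprK !psiK rmorphD. Qed.

Lemma pi_pullM q1 q2 : \pi_A (pull (q1 * q2)) = \pi_A (pull q1 * pull q2).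
Proof. by apply: (can_inj phiK); rewrite !rmorphM /= /pull !reprK !psiK rmorphM. Qed.

Lemma pi_pullC c : \pi_A (pull c%:MP) = \pi_A c%:MP.
Proof. by rewrite /pull reprK -phiC phiK. Qed.

(* The pulled-back variables generate P/I as a K-algebra, so a tangent
   vector vanishing on them vanishes identically. *)
Lemma tangent_pull_generators (d : {mpoly K[n]} -> K) :
  tangent I d -> (forall j, d (pull 'X_j) = 0) -> forall p, d p = 0.
Proof.
move=> dT dX; have [[dD dC dM] _] := dT.
have d_pull q : d (pull q) = 0.
  elim/mpoly_alg_ind: q => [c | j | q1 q2 h1 h2 | q1 q2 h1 h2].
  - by rewrite (tangent_pi dT (pi_pullC c)) dC.
  - exact: dX.
  - by rewrite (tangent_pi dT (pi_pullD q1 q2)) dD h1 h2 addr0.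
  - by rewrite (tangent_pi dT (pi_pullM q1 q2)) dM h1 h2 !mulr0 addr0.
move=> p; rewrite -(d_pull (repr (phi (\pi_A p)))); apply: (tangent_pi dT).
by rewrite /pull !reprK phiK.
Qed.

End TangentsUnderIsomorphism.

Section QuotientByRetraction.
Variables (R S : comNzRingType) (I : idealr R) (beta : {rmorphism S -> R}).

Definition contraction_pred : pred S := fun q => beta q \in I.

Lemma contraction_closed : idealr_closed contraction_pred.
Proof.
split=> [|| a u v].
- by change (beta 0 \in I); rewrite rmorph0 idealr0.
- by change (~~ (beta 1 \in I)); rewrite rmorph1 idealr1.
- change (beta u \in I -> beta v \in I -> beta (a * u + v) \in I) => uI vI.
  by rewrite rmorphD rmorphM rpredD ?idealMr.
Qed.

HB.instance Definition _ := isIdealr.Build S contraction_pred contraction_closed.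

Definition contraction : idealr S := contraction_pred.

Local Notation A := {ideal_quot I}.
Local Notation B := {ideal_quot contraction}.

Lemma pi_contraction q1 q2 : (\pi_B q1 == \pi_B q2) = (\pi_A (beta q1) == \pi_A (beta q2)).
Proof. by rewrite -!Quotient.idealrBE -rmorphB. Qed.

Variable alpha : {rmorphism R -> S}.
Hypothesis beta_alpha : forall p, \pi_A (beta (alpha p)) = \pi_A p.

Definition retract_map (a : A) : B := \pi_B (alpha (repr a)).

Lemma retract_mapE p : retract_map (\pi_A p) = \pi_B (alpha p).
Proof. by apply/eqP; rewrite pi_contraction !beta_alpha reprK. Qed.

Lemma retract_map_zmod : {morph retract_map : a b / a - b}.
Proof. by move=> a b; rewrite -[a]reprK -[b]reprK -rmorphB !retract_mapE !rmorphB. Qed.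

Lemma retract_map_monoid : monoid_morphism retract_map.
Proof.
split=> [|a b]; first by rewrite -(rmorph1 (\pi_A)) retract_mapE !rmorph1.
by rewrite -[a]reprK -[b]reprK -rmorphM !retract_mapE !rmorphM.
Qed.

HB.instance Definition _ := GRing.isZmodMorphism.Build A B retract_map retract_map_zmod.
HB.instance Definition _ := GRing.isMonoidMorphism.Build A B retract_map retract_map_monoid.

(* The inverse is induced by beta. *)
Lemma retract_map_bij : bijective retract_map.
Proof.
have beta_repr q : \pi_A (beta (repr (\pi_B q))) = \pi_A (beta q).
  by apply/eqP; rewrite -pi_contraction reprK.
have alpha_beta q : \pi_B (alpha (beta q)) = \pi_B q.
  by apply/eqP; rewrite pi_contraction beta_alpha.
exists (fun b => \pi_A (beta (repr b))) => [a | b].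
  by rewrite -[a]reprK retract_mapE beta_repr beta_alpha.
by rewrite retract_mapE alpha_beta reprK.
Qed.

Lemma retract_iso : exists phi : {rmorphism A -> B},
  bijective phi /\ forall p, phi (\pi_A p) = \pi_B (alpha p).
Proof. by exists retract_map; split; [apply: retract_map_bij | apply: retract_mapE]. Qed.

End QuotientByRetraction.

Lemma size_free_le (K : fieldType) (vT : vectType K) (X : seq vT) :
  free X -> (size X <= \dim {:vT})%N.
Proof. by move=> /eqP <-; apply: dimvS; apply: subvf. Qed.

Section SeparatingTuple.
Variables (K : fieldType) (n s : nat) (I : idealr {mpoly K[n]}).
Variables (z : 'I_s -> 'I_n) (f : 'I_s -> {mpoly K[n]}).
Hypothesis zf_sep : coh_separating z f.
Hypothesis f_in_I : forall j, f j \in I.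
Local Notation P := {mpoly K[n]}.
Local Notation A := {ideal_quot I}.

Let z_inj : injective z. Proof. by case: zf_sep. Qed.
Let f_sep j : separating (z j) (f j). Proof. by case: zf_sep => _ [_ []]. Qed.
Let z_avoids j k : j != k -> avoids (z j) (f k).
Proof. by case: zf_sep => _ [_ [_]]; apply. Qed.

Definition kept : pred 'I_n := [pred x | x \notin codom z].

Lemma card_kept : #|kept| = (n - s)%N.
Proof.
have total := cardC (mem (codom z)); rewrite card_codom // !card_ord in total.
by rewrite -[X in (X - s)%N]total addKn; apply: eq_card => x; rewrite !inE.
Qed.

Definition kept_var (k : 'I_#|kept|) : 'I_n := @enum_val _ kept k.

Lemma kept_varP k : kept_var k \in kept.
Proof. exact: enum_valP. Qed.

Lemma kept_var_inj : injective kept_var.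
Proof. exact: enum_val_inj. Qed.

Lemma sep_coef_neq0 j : (f j)@_U_(z j)%MM != 0.
Proof. by case: (f_sep j) => _ []; rewrite LinM_coefU. Qed.

Lemma sep_coef_off j k : j != k -> (f k)@_U_(z j)%MM = 0.
Proof. by move/z_avoids/avoids_coefU. Qed.

Lemma tail_pi j : \pi_A (tail (z j) (f j)) = \pi_A 'X_(z j).
Proof.
apply/eqP; rewrite -Quotient.idealrBE /tail addrAC subrr add0r rpredN.
by rewrite -mul_mpolyC idealMr.
Qed.

Lemma reemb_pi p : \pi_A (reemb z f p) = \pi_A p.
Proof.
apply: comp_mpoly_congr => x; rewrite tnth_mktuple /reemb_subst.
by case: pickP => [j /eqP <- | _] //; apply: tail_pi.
Qed.

Lemma reemb_mem p : (p \in I) = (reemb z f p \in I).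
Proof.
have memE q : (q \in I) = (\pi_A q == \pi_A 0) by rewrite -Quotient.idealrBE subr0.
by rewrite !memE reemb_pi.
Qed.

Lemma reemb_subst_avoids j x : avoids (z j) (reemb_subst z f x).
Proof.
rewrite /reemb_subst; case: pickP => [k _ | no_k].
  have [<- | kj] := eqVneq k j; first by case: (f_sep k) => _ [].
  apply: avoidsB; last by apply/avoidsZ/z_avoids; rewrite eq_sym.
  by apply: avoidsX; apply: contra kj => /eqP /z_inj ->.
by apply: avoidsX; rewrite eq_sym no_k.
Qed.

Lemma reemb_Phat p : inPhat z (reemb z f p).
Proof.
apply/forallP => j; apply: avoids_comp => x; rewrite tnth_mktuple.
exact: reemb_subst_avoids.
Qed.

Lemma reemb_id q : inPhat z q -> reemb z f q = q.
Proof.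
move=> /forallP q_Phat; apply: comp_mpoly_fix => x; rewrite tnth_mktuple /reemb_subst.
by case: pickP => [j /eqP <- _ | _]; [apply: q_Phat | rewrite eqxx].
Qed.

Local Notation N := #|kept|.
Local Notation Q := {mpoly K[N]}.

Definition kept_incl : N.-tuple P := [tuple 'X_(kept_var k) | k < N].

Definition kept_proj : n.-tuple Q :=
  [tuple if [pick k | kept_var k == x] is Some k then 'X_k else 0 | x < n].

Lemma incl_proj q : inPhat z q -> comp_mpoly kept_incl (comp_mpoly kept_proj q) = q.
Proof.
move=> /forallP q_Phat; rewrite comp_mpoly_comp; apply: comp_mpoly_fix => x.
rewrite !tnth_mktuple; case: pickP => [k /eqP <- | no_k].
  by rewrite comp_mpolyXU -tnth_nth tnth_mktuple eqxx.
move=> _; have: x \notin kept.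
  apply/negP => x_kept; have := no_k (enum_rank_in x_kept x).
  by rewrite /kept_var enum_rankK_in ?eqxx.
by rewrite inE negbK => /codomP [j ->]; apply: q_Phat.
Qed.

Lemma edim_upper_bound : exists J : idealr Q, kalg_iso I J.
Proof.
pose alpha : {rmorphism P -> Q} :=
  comp_mpoly [tuple comp_mpoly kept_proj (tnth [tuple reemb_subst z f x | x < n] x) | x < n].
pose beta : {rmorphism Q -> P} := comp_mpoly kept_incl.
have beta_alpha p : \pi_A (beta (alpha p)) = \pi_A p.
  by rewrite /= -comp_mpoly_comp incl_proj ?reemb_pi ?reemb_Phat.
have [phi [phi_bij phiE]] := retract_iso beta_alpha.
by exists (contraction I beta), phi; split=> // c; rewrite phiE /= comp_mpolyC.
Qed.

Hypothesis lin_dim : dimLinM (mem I) s.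

(* If g has no linear term in Z but some linear term elsewhere, the linear
   parts of g, f_1, ..., f_s are independent: the f_j are "diagonal" on Z. *)
Lemma free_linear_parts (g : P) (x : 'I_n) :
  (forall k, g@_U_(z k)%MM = 0) -> g@_U_(x)%MM != 0 ->
  free (map (@linvec K n) [tuple of g :: [tuple f j | j < s]]).
Proof.
move=> gz gx; pose X := map_tuple (@linvec K n) [tuple of g :: [tuple f j | j < s]].
change (free X); apply/freeP => a comb0.
have coord y :
    a ord0 * g@_U_(y)%MM + \sum_(j < s) a (lift ord0 j) * (f j)@_U_(y)%MM = 0.
  transitivity ((\sum_(i < s.+1) a i *: X`_i) 0 y); last by rewrite comb0 mxE.
  rewrite summxE big_ord_recl; congr (_ + _); first by rewrite mxE linvecE.
  apply: eq_bigr => j _.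
  by rewrite mxE -tnth_nth tnth_map tnthS tnth_mktuple linvecE.
have a_f j : a (lift ord0 j) = 0.
  have := coord (z j); rewrite gz mulr0 add0r (bigD1 j) //= big1 => [|k kj].
    by rewrite addr0 => /eqP; rewrite mulf_eq0 (negbTE (sep_coef_neq0 j)) orbF => /eqP.
  by rewrite sep_coef_off ?mulr0 // eq_sym.
have a_g : a ord0 = 0.
  have := coord x; rewrite big1 => [|j _]; last by rewrite a_f mul0r.
  by rewrite addr0 => /eqP; rewrite mulf_eq0 (negbTE gx) orbF => /eqP.
by move=> i; case: (unliftP ord0 i) => [j -> | ->].
Qed.

Lemma linear_part_reduced (g : P) :
  g \in I -> (forall k, g@_U_(z k)%MM = 0) -> forall x, g@_U_(x)%MM = 0.
Proof.
move=> gI gz x; apply/eqP/negP => /negP gx.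
have: (s.+1 <= s)%N.
  apply: lin_dim.2 (free_linear_parts gz gx).
  by rewrite /= gI; apply/allP => p /mapP [j _ ->]; apply: f_in_I.
by rewrite ltnn.
Qed.

(* Subtract from p the combination of the f_j that kills its linear terms in Z. *)
Definition sep_reduce (p : P) : P :=
  p - \sum_j (p@_U_(z j)%MM / (f j)@_U_(z j)%MM) *: f j.

Lemma sep_reduce_coefU p x : (sep_reduce p)@_U_(x)%MM =
  p@_U_(x)%MM - \sum_j ((f j)@_U_(x)%MM / (f j)@_U_(z j)%MM) * p@_U_(z j)%MM.
Proof.
rewrite mcoeffB raddf_sum /=; congr (_ - _); apply: eq_bigr => j _.
by rewrite mcoeffZ mulrC mulrA [RHS]mulrAC.
Qed.

Lemma sep_reduce_coef_z p k : (sep_reduce p)@_U_(z k)%MM = 0.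
Proof.
rewrite sep_reduce_coefU (bigD1 k) //= big1 => [|j jk].
  by rewrite divff ?sep_coef_neq0 // mul1r addr0 subrr.
by rewrite sep_coef_off ?mul0r // eq_sym.
Qed.

Definition sep_tangent (x : 'I_n) (p : P) : K := (sep_reduce p)@_U_(x)%MM.

Lemma sep_tangentP x : tangent I (sep_tangent x).
Proof.
split.
  apply: point_derivation_ext (fun p => esym (sep_reduce_coefU p x)) _.
  apply: point_derivationB (point_derivation_coefU x) _.
  by apply: point_derivation_sum => j; apply: point_derivation_coefU.
move=> p pI; apply: linear_part_reduced => [|k]; last exact: sep_reduce_coef_z.
by rewrite rpredB // rpred_sum // => j _; rewrite -mul_mpolyC idealMr.
Qed.

Lemma sep_tangentX x y : y \in kept -> sep_tangent x 'X_y = (y == x)%:R.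
Proof.
move=> y_kept; rewrite /sep_tangent sep_reduce_coefU mcoeffXU big1 ?subr0 // => j _.
by rewrite mcoeffXU; case: eqP y_kept => [-> | _]; rewrite ?inE ?codom_f ?mulr0.
Qed.

Lemma sep_tangents_indep (a : 'I_#|kept| -> K) :
  (forall p, \sum_k a k * sep_tangent (kept_var k) p = 0) -> forall k, a k = 0.
Proof.
move=> comb0 k; have := comb0 'X_(kept_var k).
rewrite (bigD1 k) //= sep_tangentX ?kept_varP // eqxx mulr1 big1 ?addr0 // => k' k'k.
by rewrite sep_tangentX ?kept_varP // (inj_eq kept_var_inj) eq_sym (negbTE k'k) mulr0.
Qed.

(* Optimality: an isomorphism P/I ~= K[y_1..y_m]/J forces |X \ Z| <= m, since
   the independent tangent vectors D_x, x in X \ Z, are determined by their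
   values on the pulled-back y_j, i.e. by a vector of K^m. *)
Lemma edim_lower_bound m (J : idealr {mpoly K[m]}) : kalg_iso I J -> (#|kept| <= m)%N.
Proof.
move=> [phi [[psi phiK psiK] phiC]].
pose v k : 'rV[K]_m := \row_j sep_tangent (kept_var k) (pull psi 'X_j).
have: free [tuple v k | k < #|kept|].
  apply/freeP => a comb0; apply: sep_tangents_indep.
  apply: (tangent_pull_generators phiK psiK phiC).
    by apply: tangent_sum => k; apply: sep_tangentP.
  move=> j; have := congr1 (fun w : 'rV_m => w 0 j) comb0.
  rewrite summxE mxE => comb0j; rewrite -[RHS]comb0j.
  by apply: eq_bigr => k _; rewrite mxE -tnth_nth tnth_mktuple mxE.
by move/size_free_le; rewrite size_tuple dimvf /dim /= mul1n.
Qed.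


End SeparatingTuple.

Theorem corollary4p2 (K : fieldType) (n s : nat)
    (I : idealr {mpoly K[n]})
    (z : 'I_s -> 'I_n) (f : 'I_s -> {mpoly K[n]}) :
  (forall p, p \in I -> inM p) ->
  coh_separating z f ->
  (forall i, f i \in I) ->
  dimLinM (mem I) s ->
  [/\ edim_eq I (n - s)%N,
      (forall p, inPhat z (reemb z f p)),
      (forall p, (p \in I) = (reemb z f p \in I)),
      (forall q, inPhat z q -> exists p, reemb z f p - q \in I)
      /\ #|[pred x | x \notin codom z]| = (n - s)%N
    & (forall (m : nat) (J : idealr {mpoly K[m]}), kalg_iso I J -> (n - s <= m)%N)].
Proof.
move=> _ zf_sep f_in_I lin_dim.
have optimal m (J : idealr {mpoly K[m]}) : kalg_iso I J -> (n - s <= m)%N.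
  by rewrite -(card_kept zf_sep); exact (edim_lower_bound zf_sep f_in_I lin_dim (J := J)).
split=> //.
- by split=> //; rewrite -(card_kept zf_sep); apply: edim_upper_bound zf_sep f_in_I.
- exact: reemb_Phat zf_sep.
- exact (reemb_mem z f_in_I).
- split; last exact: card_kept zf_sep.
  by move=> q q_Phat; exists q; rewrite reemb_id // subrr rpred0.
Qed.
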